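(* Let $p$ be a prime and $\mathcal{A}$ an irreducible $3\times3$ znz-pattern. Then $\mathcal{A}$ is potentially nilpotent over $\mathbb{Z}_p$ if and only if, up to equivalence, one of the following holds: 1. $\mathcal{A}$ is one of $\begin{bmatrix}0&*&0\\ *&0&*\\ 0&*&0\end{bmatrix}$, $\begin{bmatrix}*&*&0\\ *&0&*\\ *&0&*\end{bmatrix}$, $\begin{bmatrix}0&*&0\\ *&*&*\\ *&0&*\end{bmatrix}$, $\begin{bmatrix}*&*&*\\ *&*&*\\ *&*&0\end{bmatrix}$ (any $p$); 2. $\mathcal{A}$ is one of $\begin{bmatrix}*&*&0\\ *&0&*\\ 0&*&*\end{bmatrix}$, $\begin{bmatrix}*&*&*\\ *&*&*\\ *&0&0\end{bmatrix}$, $\begin{bmatrix}*&*&*\\ *&0&*\\ *&0&*\end{bmatrix}$, $\begin{bmatrix}*&*&*\\ *&*&*\\ *&0&*\end{bmatrix}$, $\begin{bmatrix}0&*&*\\ *&0&*\\ *&*&0\end{bmatrix}$, $\begin{bmatrix}*&*&*\\ *&*&*\\ *&*&*\end{bmatrix}$, and $p\neq2$; 3. $\mathcal{A}$ is one of $\begin{bmatrix}*&*&0\\ *&*&*\\ 0&*&*\end{bmatrix}$, $\begin{bmatrix}*&*&0\\ *&*&*\\ *&0&*\end{bmatrix}$, $\begin{bmatrix}0&*&*\\ *&*&*\\ *&0&*\end{bmatrix}$, and $p\notin\{2,3\}$; 4. $\mathcal{A}=\begin{bmatrix}*&*&0\\ 0&*&*\\ *&0&*\end{bmatrix}$ and the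 polynomial $x^3-1$ splits into three linear factors over $\mathbb{Z}_p$.
   Context: A znz-pattern is a square matrix with entries in $\{*,0\}$; a realization over $\mathbb{F}$ is a matrix over $\mathbb{F}$ with nonzero entries exactly at the $*$ positions; potentially nilpotent over $\mathbb{F}$ means some realization is nilpotent. The digraph $D(\mathcal{A})$ has vertices $1,\ldots,n$ and an arc $(i,j)$ when $\mathcal{A}_{i,j}=*$; $\mathcal{A}$ is irreducible iff $D(\mathcal{A})$ is strongly connected. Two patterns are equivalent if they have the same digraph up to relabeling of vertices (i.e., they are permutation similar). $\mathbb{Z}_p$ is the field with $p$ elements. *)

From HB Require Import structures.
From mathcomp Require Import all_boot all_order all_algebra all_fingroup.
Set Implicit Arguments. Unset Strict Implicit. Unset Printing Implicit Defensive.
Import GRing.Theory.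
Local Open Scope ring_scope.

(* A znz-pattern of order n: a boolean matrix, true = '*', false = '0'. *)
Definition znz_pattern (n : nat) := 'M[bool]_n.

Definition pat_rel n (P : znz_pattern n) : rel 'I_n := fun i j => P i j.

Definition pat_irreducible n (P : znz_pattern n) : Prop :=
  forall i j : 'I_n, connect (pat_rel P) i j.

Definition realizes (F : nzRingType) n (A : 'M[F]_n) (P : znz_pattern n) : Prop :=
  forall i j, (A i j != 0) = P i j.

Definition nilpotent_mx (F : nzRingType) n (A : 'M[F]_n) : Prop :=
  exists k : nat, A ^+ k = 0.

Definition potentially_nilpotent (F : nzRingType) n (P : znz_pattern n) : Prop :=
  exists A : 'M[F]_n, realizes A P /\ nilpotent_mx A.

Definition pat_equiv n (P Q : znz_pattern n) : Prop :=
  exists s : 'S_n, forall i j, P i j = Q (s i) (s j).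

Definition mkpat3 (s : seq bool) : znz_pattern 3 :=
  \matrix_(i < 3, j < 3) nth false s (3 * i + j)%N.


Definition pats_case1 : seq (znz_pattern 3) := map mkpat3
  [:: [:: false; true; false;  true; false; true;  false; true; false];
      [:: true; true; false;   true; false; true;  true; false; true];
      [:: false; true; false;  true; true; true;   true; false; true];
      [:: true; true; true;    true; true; true;   true; true; false]].

Definition pats_case2 : seq (znz_pattern 3) := map mkpat3
  [:: [:: true; true; false;   true; false; true;  false; true; true];
      [:: true; true; true;    true; true; true;   true; false; false];
      [:: true; true; true;    true; false; true;  true; false; true];
      [:: true; true; true;    true; true; true;   true; false; true];
      [:: false; true; true;   true; false; true;  true; true; false];
      [:: true; true; true;    true; true; true;   true; true; true]].

Definition pats_case3 : seq (znz_pattern 3) := map mkpat3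
  [:: [:: true; true; false;   true; true; true;   false; true; true];
      [:: true; true; false;   true; true; true;   true; false; true];
      [:: false; true; true;   true; true; true;   true; false; true]].

Definition pat_case4 : znz_pattern 3 :=
  mkpat3 [:: true; true; false;  false; true; true;  true; false; true].

Definition cube_unity_splits (F : fieldType) : Prop :=
  exists a b c : F, ('X^3 - 1 : {poly F}) = ('X - a%:P) * ('X - b%:P) * ('X - c%:P).

From HB Require Import structures.
From mathcomp Require Import all_boot all_order all_algebra all_fingroup.
From mathcomp.algebra_tactics Require Import ring.
Set Implicit Arguments. Unset Strict Implicit. Unset Printing Implicit Defensive.
Import GRing.Theory.
Local Open Scope ring_scope.

(* The proof rests on four facts.
   - Nilpotency: a 3x3 matrix over a field is nilpotent iff its trace, its
     second elementary invariant sigma2 and its determinant vanish (Cayley-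
     Hamilton, and conversely a scaling argument).  These three invariants are
     written as explicit signed monomials in the entries, so a pattern P is
     potentially nilpotent iff some list supported by P annihilates them.
   - Obstruction: if, for some invariant, exactly one monomial only involves
     starred entries, that invariant is a nonzero product for every
     realization, so P is potentially nilpotent over no field.
   - Witnesses: an integer matrix with vanishing invariants whose nonzero
     entries divide d realizes its support over Z_p for every p not dividing
     d; exhaustive search over Z_2 and Z_3 shows the other direction for the
     patterns of cases 2 and 3, and case 4 reduces to Vieta's formulas.
   - Classification: permutation similarity preserves potential nilpotency,
     and a computation over the 512 patterns shows that every irreducible one
     is obstructed or equivalent to a pattern of the four lists. *)

Definition i0 : 'I_3 := @Ordinal 3 0 isT.
Definition i1 : 'I_3 := @Ordinal 3 1 isT.
Definition i2 : 'I_3 := @Ordinal 3 2 isT.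

Lemma ord3P (i : 'I_3) : [\/ i = i0, i = i1 | i = i2].
Proof.
by case: i => [[|[|[|//]]] ?]; [apply: Or31 | apply: Or32 | apply: Or33]; apply: val_inj.
Qed.

Definition entries (T : Type) (N : 'M[T]_3) : seq T :=
  [:: N i0 i0; N i0 i1; N i0 i2; N i1 i0; N i1 i1; N i1 i2; N i2 i0; N i2 i1; N i2 i2].
Arguments entries {T} N.

Lemma nth_entries (T : Type) (x0 : T) (N : 'M[T]_3) (i j : 'I_3) :
  nth x0 (entries N) (3 * i + j)%N = N i j.
Proof. by case: (ord3P i) => ->; case: (ord3P j) => ->. Qed.

(* A signed monomial in the entries: a sign flag ([true] for minus) and the
   positions of the entries that are multiplied. *)
Definition monomial := (bool * seq nat)%type.

Definition eval_monomial (R : pzRingType) (l : seq R) (m : monomial) : R :=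
  (if m.1 then -1 else 1) * foldr (fun k r => nth 0 l k * r) 1 m.2.

Definition eval_spoly (R : pzRingType) (l : seq R) (q : seq monomial) : R :=
  foldr (fun m r => eval_monomial l m + r) 0 q.

(* Trace, sum of principal 2x2 minors and determinant of a 3x3 matrix: up to
   sign, the coefficients of its characteristic polynomial. *)
Definition tr_poly : seq monomial := [:: (false, [:: 0]); (false, [:: 4]); (false, [:: 8])]%N.
Definition sigma2_poly : seq monomial :=
  [:: (false, [:: 0; 4]); (true, [:: 1; 3]); (false, [:: 0; 8]);
      (true, [:: 2; 6]); (false, [:: 4; 8]); (true, [:: 5; 7])]%N.
Definition det_poly : seq monomial :=
  [:: (false, [:: 0; 4; 8]); (true, [:: 0; 5; 7]); (true, [:: 1; 3; 8]);
      (false, [:: 1; 5; 6]); (false, [:: 2; 3; 7]); (true, [:: 2; 4; 6])]%N.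
Definition char_polys : seq (seq monomial) := [:: tr_poly; sigma2_poly; det_poly].

Definition coeffs_vanish (R : pzRingType) (l : seq R) : bool :=
  all (fun q => eval_spoly l q == 0) char_polys.

Lemma sum3 (V : nmodType) (f : 'I_3 -> V) : \sum_(k < 3) f k = f i0 + f i1 + f i2.
Proof.
rewrite !big_ord_recl big_ord0 addr0 addrA.
by congr (f _ + f _ + f _); apply: val_inj.
Qed.

Section CayleyHamilton.
Variable R : comNzRingType.
Implicit Type N : 'M[R]_3.

Definition tr3 N := eval_spoly (entries N) tr_poly.
Definition sigma2 N := eval_spoly (entries N) sigma2_poly.
Definition det3 N := eval_spoly (entries N) det_poly.

Lemma cayley_hamilton3 N : N ^+ 3 = tr3 N *: N ^+ 2 - sigma2 N *: N + det3 N *: 1.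
Proof.
apply/matrixP => i j; rewrite !exprS expr0 !mulr1 -!mulmxE !mxE !sum3 ?mxE ?sum3.
rewrite /tr3 /sigma2 /det3 /eval_spoly /eval_monomial /=.
by case: (ord3P i) => ->; case: (ord3P j) => ->; rewrite /= ?mulr1n ?mulr0n; ring.
Qed.

Lemma tr3_sqr N : tr3 (N ^+ 2) = tr3 N ^+ 2 - 2 * sigma2 N.
Proof.
rewrite /tr3 /sigma2 /eval_spoly /eval_monomial /= expr2 -mulmxE !mxE !sum3; ring.
Qed.

End CayleyHamilton.

Lemma scaled_power (R : pzRingType) (A : lalgType R) (a : R) (x y : A) k :
  a *: x = x * y -> a ^+ k *: x = x * y ^+ k.
Proof.
move=> axy; elim: k => [|k IHk]; first by rewrite expr0 scale1r mulr1.
by rewrite exprS -scalerA IHk scalerAl axy -mulrA -exprS.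
Qed.

(* If [N] is nilpotent and [a *: X = X * (N * Q)] with [Q] commuting with [N],
   then [a = 0] or [X = 0]: raise to the nilpotency index. *)
Lemma scaled_nilpotent (F : fieldType) (A : lalgType F) (a : F) (N X Q : A) k :
  N ^+ k = 0 -> GRing.comm N Q -> a *: X = X * (N * Q) -> a = 0 \/ X = 0.
Proof.
move=> Nk cNQ /(scaled_power k); rewrite exprMn_comm // Nk mul0r mulr0 => /eqP.
by rewrite scaler_eq0 expf_eq0 => /orP[/andP[_ /eqP] | /eqP]; [left | right].
Qed.

Lemma commrZ (R : comPzRingType) (A : algType R) (a : R) (x y : A) :
  GRing.comm x y -> GRing.comm x (a *: y).
Proof. by move=> cxy; rewrite /GRing.comm -scalerAl -scalerAr cxy. Qed.

Section Nilpotent3.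
Variable F : fieldType.
Implicit Type N : 'M[F]_3.

Lemma coeffs_vanish3 N :
  coeffs_vanish (entries N) = [&& tr3 N == 0, sigma2 N == 0 & det3 N == 0].
Proof. by rewrite /coeffs_vanish /= andbT. Qed.

Lemma tr3_sigma2_0 : tr3 (0 : 'M[F]_3) = 0 /\ sigma2 (0 : 'M[F]_3) = 0.
Proof.
by rewrite /tr3 /sigma2 /eval_spoly /eval_monomial /entries !mxE /= !(mul0r, mulr0, addr0).
Qed.

(* One direction is Cayley-Hamilton; for the other, rewriting
   Cayley-Hamilton as [a *: X = X * (N * Q)] kills the coefficients one after
   the other with [scaled_nilpotent]: first det, then sigma2, then trace. *)
Lemma nilpotent3P N : nilpotent_mx N <-> coeffs_vanish (entries N).
Proof.
rewrite coeffs_vanish3.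
split=> [[k Nk] | /and3P[/eqP t0 /eqP s0 /eqP d0]]; last first.
  by exists 3%N; rewrite cayley_hamilton3 t0 s0 d0 !scale0r subrr addr0.
have [tr00 s00] := tr3_sigma2_0.
pose t := tr3 N; pose s := sigma2 N; pose d := det3 N.
have CH := cayley_hamilton3 N; rewrite -/t -/s -/d in CH.
have cN1 : GRing.comm N 1 := commr1 N.
have cNN : GRing.comm N N := commr_refl N.
have d0 : d = 0.
  have cNQ := commrD (commrB (commrX 2 cNN) (commrZ t cNN)) (commrZ s cN1).
  have dE : d *: 1 = 1 * (N * (N ^+ 2 - t *: N + s *: 1)).
    rewrite mul1r mulrDr mulrBr -!scalerAr -expr2 -exprS mulr1 CH.
    by rewrite (addrAC (t *: _ - _)) (addrAC (t *: _)) subrr add0r addrAC addNr add0r.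
  by case: (scaled_nilpotent Nk cNQ dE) => // /eqP; rewrite oner_eq0.
have s0 : s = 0.
  have cNQ := commrB (commrZ t cN1) cNN.
  have sE : s *: N = N * (N * (t *: 1 - N)).
    rewrite mulrBr mulrBr -!scalerAr mulr1 -expr2 -exprS CH d0 scale0r addr0.
    by rewrite opprB addrC subrK.
  by case: (scaled_nilpotent Nk cNQ sE) => // N0; rewrite /s N0.
have t0 : t = 0.
  have tE : t *: N ^+ 2 = N ^+ 2 * (N * 1).
    by rewrite mulr1 -exprSr CH s0 d0 !scale0r subr0 addr0.
  case: (scaled_nilpotent Nk cN1 tE) => // N20.
  have /esym/eqP := tr3_sqr N; rewrite N20 -/t -/s s0 mulr0 subr0 tr00.
  by rewrite sqrf_eq0 => /eqP.
by rewrite -/t -/s -/d t0 s0 d0 eqxx.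
Qed.

End Nilpotent3.

Definition supported (R : pzRingType) (l : seq R) (s : seq bool) : Prop :=
  forall k, (nth 0 l k != 0) = nth false s k.

Lemma realizesE (R : nzRingType) (N : 'M[R]_3) (P : 'M[bool]_3) :
  realizes N P <-> supported (entries N) (entries P).
Proof.
split=> [NP k | NP i j]; last by rewrite -(nth_entries 0) -(nth_entries false) NP.
by do 9?[case: k => [|k]]; rewrite /= ?NP ?nth_nil ?eqxx.
Qed.

Lemma supported_cons (R : pzRingType) (x : R) l b s :
  supported (x :: l) (b :: s) <-> (x != 0) = b /\ supported l s.
Proof.
split=> [H | [xb H] [|k] //=]; first by split=> [|k]; [exact: H 0%N | exact: H k.+1].
Qed.

Definition mx3 (R : pzRingType) (l : seq R) : 'M[R]_3 := \matrix_(i, j) nth 0 l (3 * i + j)%N.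

Lemma entries_mx3 (R : pzRingType) (l : seq R) : size l = 9%N -> entries (mx3 l) = l.
Proof. by do 9?[case: l => [|? l] //]; case: l => // _; rewrite /entries !mxE. Qed.

Lemma potentially_nilpotent3P (F : fieldType) (P : 'M[bool]_3) :
  potentially_nilpotent F P <->
  exists l : seq F, [/\ size l = 9%N, supported l (entries P) & coeffs_vanish l].
Proof.
split=> [[N [/realizesE NP /nilpotent3P Nnil]] | [l [l9 lP lvan]]]; first by exists (entries N).
by exists (mx3 l); rewrite realizesE nilpotent3P entries_mx3.
Qed.

Definition survives (s : seq bool) (m : monomial) : bool := all (nth false s) m.2.

Definition obstructed (s : seq bool) : bool :=
  has (fun q => count (survives s) q == 1%N) char_polys.

Section Obstruction.
Variables (R : idomainType) (l : seq R) (s : seq bool).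
Hypothesis ls : supported l s.

Lemma monomial_prod_eq0 ks :
  (foldr (fun k r => nth 0 l k * r) 1 ks == 0) = ~~ all (nth false s) ks.
Proof.
elim: ks => [|k ks IH] /=; first by rewrite oner_eq0.
by rewrite mulf_eq0 IH -ls negb_and negbK.
Qed.

Lemma eval_monomial_eq0 m : ~~ survives s m -> eval_monomial l m = 0.
Proof. by rewrite /eval_monomial -monomial_prod_eq0 => /eqP->; rewrite mulr0. Qed.

Lemma eval_monomial_neq0 m : survives s m -> eval_monomial l m != 0.
Proof.
rewrite /survives -[all _ _]negbK -monomial_prod_eq0 => m_neq0.
by rewrite mulf_neq0 //; case: m.1; rewrite ?oppr_eq0 oner_eq0.
Qed.

Lemma eval_spoly_eq0 q : count (survives s) q = 0%N -> eval_spoly l q = 0.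
Proof.
elim: q => //= m q IH; case sm: (survives s m) => //= /IH.
by rewrite /eval_spoly /= => ->; rewrite addr0 eval_monomial_eq0 ?sm.
Qed.

Lemma eval_spoly_neq0 q : count (survives s) q = 1%N -> eval_spoly l q != 0.
Proof.
elim: q => //= m q IH; rewrite /eval_spoly /= -/(eval_spoly l q).
case sm: (survives s m) => /=.
  by case=> /eval_spoly_eq0->; rewrite addr0 eval_monomial_neq0.
by move/IH; rewrite eval_monomial_eq0 ?sm // add0r.
Qed.

End Obstruction.

Lemma obstructed_not_pn (F : fieldType) (P : 'M[bool]_3) :
  obstructed (entries P) -> ~ potentially_nilpotent F P.
Proof.
move=> /hasP[q qchar /eqP q1] /potentially_nilpotent3P[l [_ lP /allP lvan]].
by move: (lvan q qchar); rewrite (negbTE (eval_spoly_neq0 lP q1)).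
Qed.

Lemma eval_spoly_rmorph (R S : pzRingType) (f : {rmorphism R -> S}) (l : seq R) q :
  eval_spoly (map f l) q = f (eval_spoly l q).
Proof.
have nth_f k : nth 0 (map f l) k = f (nth 0 l k).
  have [kl | lk] := ltnP k (size l); first by rewrite (nth_map 0).
  by rewrite !nth_default ?size_map // rmorph0.
elim: q => [|[b ks] q IH]; rewrite /eval_spoly /= ?rmorph0 // -!/(eval_spoly _ q) IH rmorphD.
congr (_ + _); rewrite /eval_monomial /= rmorphM; congr (_ * _).
  by case: b; rewrite ?rmorphN rmorph1.
by elim: ks => [|k ks IHk] /=; rewrite ?rmorph1 // rmorphM nth_f IHk.
Qed.

Definition witness_ok (d : nat) (s : seq bool) (w : seq int) : bool :=
  [&& size w == 9%N, [seq z != 0 | z <- w] == s,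
      all (fun z => (z == 0) || (`|z| %| d)%N) w & coeffs_vanish w].

Lemma witness_pn (p d : nat) (P : 'M[bool]_3) (w : seq int) :
  prime p -> (0 < d)%N -> p \notin primes d -> witness_ok d (entries P) w ->
  potentially_nilpotent 'F_p P.
Proof.
move=> p_pr d_gt0 pNd /and4P[/eqP w9 /eqP wP /allP wd wvan].
apply/potentially_nilpotent3P; exists (map intr w); split.
- by rewrite size_map.
- move=> k; rewrite -wP; have [kw | wk] := ltnP k (size w); last first.
    by rewrite !nth_default ?size_map ?eqxx.
  rewrite !(nth_map 0) // -(dvdz_pcharf (pchar_Fp p_pr)) dvdzE absz_nat.
  have [-> | z_neq0] := eqVneq (nth 0 w k) 0; first by rewrite dvdn0.
  move: (wd _ (mem_nth 0 kw)); rewrite (negbTE z_neq0) /= => zd.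
  apply: contraNN pNd => /dvdn_trans/(_ zd) pd.
  by rewrite mem_primes p_pr d_gt0.
- by apply/allP => q qc; rewrite eval_spoly_rmorph (eqP (allP wvan q qc)) rmorph0.
Qed.

Fixpoint supported_lists (R : pzRingType) (nz : seq R) (s : seq bool) : seq (seq R) :=
  if s is b :: s' then
    [seq x :: l | x <- (if b then nz else [:: 0]), l <- supported_lists nz s']
  else [:: [::]].

Lemma mem_supported_lists (R : pzRingType) (nz : seq R) s l :
  (forall x, x != 0 -> x \in nz) -> size l = size s -> supported l s ->
  l \in supported_lists nz s.
Proof.
move=> nzP; elim: s l => [|b s IH] [|x l] //= [ls] /supported_cons[xb lsupp].
apply: allpairs_f; last exact: IH.
by case: b xb => [/nzP // | /negbFE/eqP->]; rewrite mem_seq1.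
Qed.

Definition Fp_nonzero (p : nat) : seq 'F_p := [seq k%:R | k <- iota 1 p.-1].

Lemma Fp_nonzeroP (p : nat) (x : 'F_p) : prime p -> x != 0 -> x \in Fp_nonzero p.
Proof.
move=> p_pr x_neq0; apply/mapP; exists (val x); last by rewrite natr_Zp.
rewrite mem_iota add1n (prednK (prime_gt0 p_pr)) lt0n x_neq0 /=.
by rewrite -[X in (_ < X)%N](Fp_cast p_pr) ltn_ord.
Qed.

Definition pn_search (p : nat) (s : seq bool) : bool :=
  has (@coeffs_vanish _) (supported_lists (Fp_nonzero p) s).

Lemma pn_search_complete (p : nat) (P : 'M[bool]_3) :
  prime p -> potentially_nilpotent 'F_p P -> pn_search p (entries P).
Proof.
move=> p_pr /potentially_nilpotent3P[l [l9 lP lvan]]; apply/hasP; exists l => //.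
by apply: mem_supported_lists => // x; apply: Fp_nonzeroP.
Qed.

Section CubeRoots.
Variable F : fieldType.

Lemma expand_cubic (a b c : F) :
  ('X - a%:P) * ('X - b%:P) * ('X - c%:P) =
  'X^3 - (a + b + c)%:P * 'X^2 + (a * b + a * c + b * c)%:P * 'X - (a * b * c)%:P :> {poly F}.
Proof. rewrite !polyCD !polyCM; ring. Qed.

Lemma vieta_cube_roots (a b c : F) :
  ('X^3 - 1 = ('X - a%:P) * ('X - b%:P) * ('X - c%:P)) <->
  [/\ a + b + c = 0, a * b + a * c + b * c = 0 & a * b * c = 1].
Proof.
rewrite expand_cubic; split=> [E | [-> -> ->]]; last by rewrite polyC0 !mul0r subr0 addr0.
have coef k := congr1 (fun q : {poly F} => q`_k) E.
move: (coef 2%N) (coef 1%N) (coef 0%N).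
rewrite !coefE /= !(subr0, sub0r, mulr0, mulr1, addr0, oppr0, add0r).
by move=> /esym/eqP; rewrite oppr_eq0 => /eqP-> /esym-> /oppr_inj.
Qed.

(* Case 4: the diagonal [a, b, c] of a realization satisfies [a + b + c = 0]
   and [ab + ac + bc = 0] (the zero pattern kills all other terms), so
   [1, b/a, c/a] are the three cube roots of unity; conversely cube roots of
   unity on the diagonal, completed by the cycle [1, 1, -1], give a nilpotent
   realization. *)
Lemma case4_pn : potentially_nilpotent F pat_case4 <-> cube_unity_splits F.
Proof.
rewrite potentially_nilpotent3P.
have -> : entries pat_case4 = [:: true; true; false; false; true; true; true; false; true].
  by rewrite /entries !mxE.
split.
- case=> l [].
  case: l => [|a [|x01 [|x02 [|x10 [|b [|x12 [|x20 [|x21 [|c [|? ?]]]]]]]]]] //= _.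
  rewrite !supported_cons => -[a0 [_ [/negbFE/eqP-> [/negbFE/eqP->]]]].
  move=> -[_ [_ [_ [/negbFE/eqP-> _]]]].
  rewrite /coeffs_vanish /eval_spoly /eval_monomial /= !(mul0r, mulr0, mulr1, mul1r, addr0, subr0).
  case/and4P=> /eqP t0 /eqP s0 _ _; rewrite !add0r in s0.
  exists 1, (b / a), (c / a); apply/vieta_cube_roots; split.
  + have -> : 1 + b / a + c / a = (a + (b + c)) / a by field.
    by rewrite t0 mul0r.
  + have -> : 1 * (b / a) + 1 * (c / a) + b / a * (c / a) = (a * b + (a * c + b * c)) / a ^+ 2.
      by field.
    by rewrite s0 mul0r.
  + have -> : 1 * (b / a) * (c / a) = 1 + (a * b + (a * c + b * c) - a * (a + (b + c))) / a ^+ 2.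
      by field.
    by rewrite t0 s0 mulr0 subr0 mul0r addr0.
- case=> x [y [z /vieta_cube_roots[S1 S2 S3]]].
  have /and3P[x0 y0 z0] : [&& x != 0, y != 0 & z != 0].
    apply: contra_eqT S3; rewrite !negb_and !negbK => /or3P[] /eqP->;
    by rewrite ?mulr0 ?mul0r eq_sym oner_eq0.
  exists [:: x; 1; 0; 0; y; 1; -1; 0; z]; split=> //.
    by move=> k; do 9?[case: k => [|k]]; rewrite /= ?nth_nil ?x0 ?y0 ?z0 ?oppr_eq0 ?oner_eq0 ?eqxx.
  rewrite /coeffs_vanish /eval_spoly /eval_monomial /=; apply/and4P; split=> //; apply/eqP.
  + by transitivity (x + y + z); [ring | exact: S1].
  + by transitivity (x * y + x * z + y * z); [ring | exact: S2].
  + by transitivity (x * y * z - 1); [ring | rewrite S3 subrr].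
Qed.

End CubeRoots.

Lemma pat_equiv_sym n (P Q : 'M[bool]_n) : pat_equiv P Q -> pat_equiv Q P.
Proof. by move=> [s Hs]; exists s^-1%g => i j; rewrite Hs !permKV. Qed.

Lemma exprJ (R : pzRingType) (x y a : R) k :
  x * y = 1 -> y * x = 1 -> (x * a * y) ^+ k = x * a ^+ k * y.
Proof.
move=> xy yx; elim: k => [|k IHk]; first by rewrite !expr0 mulr1.
by rewrite exprSr IHk -!mulrA (mulrA y) yx mul1r (mulrA (a ^+ k)) -exprSr mulrA.
Qed.

Lemma pn_equiv (F : fieldType) n (P Q : 'M[bool]_n) :
  pat_equiv P Q -> potentially_nilpotent F P -> potentially_nilpotent F Q.
Proof.
move=> [s PQ] [N [NP [k Nk]]].
have perm_mxK (t : 'S_n) : perm_mx t^-1 * perm_mx t = 1 :> 'M[F]_n.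
  by rewrite -mulmxE -perm_mxM mulVg perm_mx1.
exists (col_perm s^-1 (row_perm s^-1 N)); split.
  by move=> i j; rewrite !mxE NP PQ !permKV.
exists k; rewrite col_permE row_permE invgK !mulmxE exprJ ?perm_mxK //.
  by rewrite Nk mulr0 mul0r.
by rewrite -{1}(invgK s) perm_mxK.
Qed.

Section PatternCombinatorics.
Local Open Scope nat_scope.

Definition perms3 : seq (seq nat) :=
  [:: [:: 0; 1; 2]; [:: 0; 2; 1]; [:: 1; 0; 2]; [:: 1; 2; 0]; [:: 2; 0; 1]; [:: 2; 1; 0]].

Definition equivb (s t : seq bool) : bool :=
  has (fun σ => all (fun k => nth false s k ==
                             nth false t (3 * nth 0 σ (k %/ 3) + nth 0 σ (k %% 3)))
                    (iota 0 9)) perms3.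

Lemma equivbP (P Q : 'M[bool]_3) : equivb (entries P) (entries Q) -> pat_equiv P Q.
Proof.
case/hasP=> σ σ_perm /allP σPQ.
have /and3P[σ_uniq /eqP σ_size /allP σ_lt] : [&& uniq σ, size σ == 3 & all (gtn 3) σ].
  by move: σ σ_perm {σPQ}; apply/allP.
pose f (i : 'I_3) : 'I_3 := inord (nth 0 σ i).
have fK i : f i = nth 0 σ i :> nat.
  by rewrite inordK //; apply: σ_lt; rewrite mem_nth // σ_size.
have f_inj : injective f.
  move=> i j /(congr1 (@nat_of_ord 3)); rewrite !fK => /eqP.
  by rewrite nth_uniq ?σ_size // => /eqP/val_inj.
exists (perm f_inj) => i j; rewrite !permE -(nth_entries false P) -(nth_entries false Q) !fK.
have [ij_lt ij_div ij_mod] : [/\ 3 * i + j < 9, (3 * i + j) %/ 3 = i & (3 * i + j) %% 3 = j].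
  by case: (ord3P i) => ->; case: (ord3P j) => ->.
by apply/eqP; move: (σPQ (3 * i + j)); rewrite mem_iota ij_div ij_mod; apply.
Qed.

Lemma connect_exit (T : finType) (e : rel T) (C : pred T) (x y : T) :
  connect e x y -> C x -> ~~ C y -> exists2 u, C u & exists2 v, ~~ C v & e u v.
Proof.
case/connectP=> q; elim: q x => [|z q IH] x /=; first by move=> _ -> ->.
case/andP=> exz qpath yq Cx Cy; have [Cz | nCz] := boolP (C z); first exact: IH qpath yq Cz Cy.
by exists x => //; exists z.
Qed.

(* The nonempty proper subsets of the vertices; irreducibility means that the
   digraph has an arc leaving each of them. *)
Definition vertex_cuts : seq (seq bool) :=
  [:: [:: true; false; false]; [:: false; true; false]; [:: false; false; true];
      [:: false; true; true]; [:: true; false; true]; [:: true; true; false]].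

Definition crosses (s C : seq bool) : bool :=
  has (fun u => nth false C u &&
         has (fun v => ~~ nth false C v && nth false s (3 * u + v)) (iota 0 3)) (iota 0 3).

Definition irreducibleb (s : seq bool) : bool := all (crosses s) vertex_cuts.

Lemma irreducibleb_entries (P : 'M[bool]_3) : pat_irreducible P -> irreducibleb (entries P).
Proof.
move=> P_irr; apply/allP => C C_cut.
have /andP[/hasP[x x3 Cx] /hasP[y y3 Cy]] :
    has (nth false C) (iota 0 3) && has (predC (nth false C)) (iota 0 3).
  by move: C C_cut; apply/allP.
move: x3 y3; rewrite !mem_iota /= => x3 y3.
have [u Cu [v Cv uv]] :=
  connect_exit (C := fun u : 'I_3 => nth false C u) (P_irr (Ordinal x3) (Ordinal y3)) Cx Cy.
apply/hasP; exists (nat_of_ord u); first by rewrite mem_iota /=.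
rewrite Cu; apply/hasP; exists (nat_of_ord v); first by rewrite mem_iota /=.
by rewrite Cv (nth_entries false P).
Qed.

End PatternCombinatorics.

(* Entry lists of explicit patterns, in a form that evaluates by computation. *)
Lemma entries_mkpat3 (s : seq bool) : entries (mkpat3 s) = [seq nth false s k | k <- iota 0 9].
Proof. by rewrite /entries !mxE. Qed.

Lemma irreducible_classified (P : 'M[bool]_3) : pat_irreducible P ->
  obstructed (entries P) || [|| has (equivb (entries P)) (map entries pats_case1),
                               has (equivb (entries P)) (map entries pats_case2),
                               has (equivb (entries P)) (map entries pats_case3)
                             | equivb (entries P) (entries pat_case4)].
Proof.
move/irreducibleb_entries; apply/implyP.
rewrite /pats_case1 /pats_case2 /pats_case3 -!map_comp !(eq_map entries_mkpat3).
rewrite /pat_case4 entries_mkpat3 /entries.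
move: (P i0 i0) (P i0 i1) (P i0 i2) (P i1 i0) (P i1 i1) (P i1 i2) (P i2 i0) (P i2 i1) (P i2 i2).
by do 9!case; vm_compute.
Qed.

(* Nilpotent integer witnesses for the patterns of cases 1, 2 and 3, with
   nonzero entries dividing 1, 2 and 12 respectively. *)
Definition witnesses1 : seq (seq int) :=
  [:: [:: 0; 1; 0; 1; 0; 1; 0; -1; 0]; [:: 1; 1; 0; -1; 0; 1; 1; 0; -1];
      [:: 0; 1; 0; -1; 1; 1; 1; 0; -1]; [:: 1; 1; 1; -1; -1; -1; 1; 1; 0]].

Definition witnesses2 : seq (seq int) :=
  [:: [:: 2; 1; 0; -2; 0; 1; 0; -2; -2]; [:: 1; 1; 1; 1; -1; -1; -2; 0; 0];
      [:: 1; 1; 2; 1; 0; 1; -1; 0; -1]; [:: 1; 1; 1; -1; 1; -1; -2; 0; -2];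
      [:: 0; 1; 1; 2; 0; 2; 2; -2; 0]; [:: 1; 1; 1; 1; 1; 1; -2; -2; -2]].

Definition witnesses3 : seq (seq int) :=
  [:: [:: 1; 1; 0; 1; -3; 2; 0; -4; 2]; [:: 1; 1; 0; -3; -2; 1; -1; 0; 1];
      [:: 0; 1; 1; -2; 1; 3; 1; 0; -1]].

Lemma case1_pn (p : nat) (B : 'M[bool]_3) :
  prime p -> B \in pats_case1 -> potentially_nilpotent 'F_p B.
Proof.
move=> p_pr B1.
have cert : all (fun s => has (witness_ok 1 s) witnesses1) (map entries pats_case1).
  by rewrite /pats_case1 -map_comp (eq_map entries_mkpat3); vm_compute.
have /hasP[w _ wB] := allP cert _ (map_f entries B1).
exact: witness_pn p_pr _ _ wB.
Qed.

Lemma case2_pn (p : nat) (B : 'M[bool]_3) :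
  prime p -> B \in pats_case2 -> potentially_nilpotent 'F_p B <-> (p != 2)%N.
Proof.
move=> p_pr B2.
have cert : all (fun s => has (witness_ok 2 s) witnesses2 && ~~ pn_search 2 s)
                (map entries pats_case2).
  by rewrite /pats_case2 -map_comp (eq_map entries_mkpat3); vm_compute.
have /andP[/hasP[w _ wB] no_F2] := allP cert _ (map_f entries B2).
split=> [pnB | p_neq2]; first by apply: contraNneq no_F2 => p2; rewrite -p2 pn_search_complete.
by apply: witness_pn p_pr _ _ wB; rewrite // (_ : primes 2 = [:: 2]) // inE.
Qed.

Lemma case3_pn (p : nat) (B : 'M[bool]_3) :
  prime p -> B \in pats_case3 -> potentially_nilpotent 'F_p B <-> (p \notin [:: 2; 3])%N.
Proof.
move=> p_pr B3.
have cert : all (fun s => [&& has (witness_ok 12 s) witnesses3, ~~ pn_search 2 s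
                              & ~~ pn_search 3 s])
                (map entries pats_case3).
  by rewrite /pats_case3 -map_comp (eq_map entries_mkpat3); vm_compute.
have /and3P[/hasP[w _ wB] no_F2 no_F3] := allP cert _ (map_f entries B3).
split=> [pnB | p_big]; last first.
  by apply: witness_pn p_pr _ _ wB; rewrite // (_ : primes 12 = [:: 2; 3]).
rewrite !inE negb_or; apply/andP; split.
  by apply: contraNneq no_F2 => p2; rewrite -p2 pn_search_complete.
by apply: contraNneq no_F3 => p3; rewrite -p3 pn_search_complete.
Qed.

Local Close Scope ring_scope.

Theorem theorem5p3 (p : nat) (A : 'M[bool]_3) :
  prime p -> pat_irreducible A ->
  (potentially_nilpotent 'F_p A <->
     (exists2 B, B \in pats_case1 & pat_equiv A B)
  \/ ((exists2 B, B \in pats_case2 & pat_equiv A B) /\ p != 2)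
  \/ ((exists2 B, B \in pats_case3 & pat_equiv A B) /\ p \notin [:: 2; 3])
  \/ (pat_equiv A pat_case4 /\ cube_unity_splits 'F_p)).
Proof.
move=> p_pr A_irr.
have equiv_to (L : seq 'M[bool]_3) :
    has (equivb (entries A)) (map entries L) -> exists2 B, B \in L & pat_equiv A B.
  by case/hasP=> _ /mapP[B BL ->] /equivbP; exists B.
have transfer B : pat_equiv A B ->
    potentially_nilpotent 'F_p A <-> potentially_nilpotent 'F_p B.
  by move=> AB; split; apply: pn_equiv => //; apply: pat_equiv_sym.
split=> [pnA | ].
  case/orP: (irreducible_classified A_irr) => [/obstructed_not_pn /(_ pnA) // |].
  case/or4P=> [/equiv_to A1 | /equiv_to[B B2 AB] | /equiv_to[B B3 AB] | /equivbP A4].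
  - by left.
  - by right; left; split; [exists B | apply/(case2_pn p_pr B2)/(transfer B AB)].
  - by right; right; left; split; [exists B | apply/(case3_pn p_pr B3)/(transfer B AB)].
  - by right; right; right; split; [| apply/case4_pn/(transfer _ A4)].
case=> [[B B1 AB] | [[[B B2 AB] p2] | [[[B B3 AB] p23] | [A4 cube]]]].
- by apply/(transfer B AB)/case1_pn.
- by apply/(transfer B AB)/(case2_pn p_pr B2).
- by apply/(transfer B AB)/(case3_pn p_pr B3).
- by apply/(transfer _ A4)/case4_pn.
Qed.
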